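(* Let $G=\langle S_k\mid K\rangle$ be a finitely generated semigroup as described in the context, $\mathcal{A}$ a finite alphabet and $X\subseteq\mathcal{A}^G$ a tree shift. For all $1\le i\le k$, $m\ge0$, $n\ge0$ and $q\ge1$: (i) $|\bar{\Delta}^{(s_i)}_n|=1+\sum_{l=1}^n\sum_{j=1}^k K^l(s_i,s_j)$; (ii) $|\bar{\Delta}^{(s_i)}_{n+q(m+1)}|=|\bar{\Delta}^{(s_i)}_n|+\sum_{l=1}^k\sum_{j=0}^{q-1}K^{n+j(m+1)+1}(s_i,s_l)\,|\bar{\Delta}^{(s_l)}_m|$; (iii) $p^{(s_i)}_{n+q(m+1)}\le p^{(s_i)}_n\prod_{l=1}^k\big(p^{(s_l)}_m\big)^{\sum_{j=0}^{q-1}K^{n+j(m+1)+1}(s_i,s_l)}$. Here $K^l(s_i,s_j)$ denotes the $(s_i,s_j)$ entry of the $l$th power of $K$.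
   Context: Let $K$ be a $k\times k$ matrix with entries in $\{0,1\}$ indexed by $S_k=\{s_1,\dots,s_k\}$, and let $G=\langle S_k\mid K\rangle$ be the semigroup generated by $S_k$ subject to the relations $s_is_j=1_G$ if and only if $K(s_i,s_j)=0$ ($1_G$ the identity). Every $g\in G$ has a unique minimal representation $g=g_1g_2\cdots g_n$ with $g_l\in S_k$ and $K(g_l,g_{l+1})=1$; its length is $|g|=n$ (with $|1_G|=0$). For $g\in G$ and $n\ge0$ the $n$-semiball at $g$ is $\bar{\Delta}^{(g)}_n=\{gh: h\in G,\ |h|\le n,\ |gh|=|g|+|h|\}$. For a finite alphabet $\mathcal{A}$, a pattern is a map $u:H\to\mathcal{A}$ with $H\subset G$ finite; $u$ is accepted by $t\in\mathcal{A}^G$ if there is $g\in G$ with $t_{gh}=u_h$ for all $h\in H$. A tree shift is a subset $X\subseteq\mathcal{A}^G$ consisting of all $t$ that accept no pattern from some fixed set $\mathcal{F}$ of patterns. $p^{(g)}_n$ denotes the number of patterns $u\in\mathcal{A}^{\bar{\Delta}^{(g)}_n}$ accepted by some $t\in X$. *)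

From mathcomp Require Import all_boot all_algebra.
From mathcomp Require Import boolp.
Set Implicit Arguments. Unset Strict Implicit. Unset Printing Implicit Defensive.

Section TreeShift.
Variables (k : nat) (K : 'M[nat]_k).

Definition adm (w : seq 'I_k) : bool := sorted (fun a b => K a b != 0%N) w.

(* The semigroup G = < S_k | K >, realised as the set of reduced words. *)
Definition G := {w : seq 'I_k | adm w}.

(* Product of reduced words: concatenate, cancelling adjacent pairs s_a s_b
   with K(s_a,s_b) = 0 at the junction (rg is the reversed left factor). *)
Fixpoint cancelw (rg h : seq 'I_k) : seq 'I_k :=
  match rg, h with
  | a :: rg', b :: h' => if K a b == 0%N then cancelw rg' h' else catrev rg h
  | _, _ => catrev rg h
  end.

Definition mulw (g h : seq 'I_k) : seq 'I_k := cancelw (rev g) h.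

Lemma adm_nil : adm [::]. Proof. by []. Qed.

Lemma adm_cancelw rg h : adm (rev rg) -> adm h -> adm (cancelw rg h).
Proof.
elim: rg h => [|a rg IH] [|b h] //=; rewrite ?catrevE ?cats0 ?revK //.
rewrite rev_cons -cats1 => Hg Hh.
case: eqP => Hab.
  apply: IH.
    by move: Hg; rewrite /adm => /cat_sorted2 [].
  by move: Hh; rewrite /adm /= => /path_sorted.
rewrite /adm in Hg *.
move: Hg; case: (rev rg) => [|c s] /=.
  by move=> _; rewrite Hh andbT; apply/eqP.
rewrite !cat_path /= => /andP[-> /andP[Hca _]] /=.
by rewrite Hh andbT; apply/andP; split=> //; apply/eqP.
Qed.

Lemma adm_mulw (g h : G) : adm (mulw (val g) (val h)).
Proof. by apply: adm_cancelw; rewrite ?revK; [exact: valP|exact: valP]. Qed.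

Definition mulG (g h : G) : G := exist _ (mulw (val g) (val h)) (adm_mulw g h).

Definition lenG (g : G) : nat := size (val g).

Definition gen (i : 'I_k) : G := exist _ [:: i] (erefl true).

Definition words_upto (n : nat) : seq (seq 'I_k) :=
  flatten [seq [seq tval t | t : l.-tuple 'I_k] | l <- iota 0 n.+1].
Definition Gupto (n : nat) : seq G := pmap insub (words_upto n).

Definition semiball (g : G) (n : nat) : seq G :=
  undup [seq mulG g h | h <- Gupto n & lenG (mulG g h) == (lenG g + lenG h)%N].

Variable A : finType.

(* A pattern with (finite) support H : seq G is u : {ffun seq_sub H -> A};
   it is accepted by t : G -> A if t_{gh} = u_h for some g and all h in H. *)
Definition accepts (t : G -> A) (H : seq G) (u : {ffun seq_sub H -> A}) : Prop :=
  exists g : G, forall x : seq_sub H, t (mulG g (ssval x)) = u x.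

Definition in_shift (F : forall H : seq G, {ffun seq_sub H -> A} -> Prop)
  (t : G -> A) : Prop :=
  forall (H : seq G) (u : {ffun seq_sub H -> A}), F H u -> ~ accepts t u.

Definition pcount (F : forall H : seq G, {ffun seq_sub H -> A} -> Prop)
  (g : G) (n : nat) : nat :=
  #|[set u : {ffun seq_sub (semiball g n) -> A} |
      `[< exists t : G -> A, in_shift F t /\ accepts t u >] ]|.

End TreeShift.

From mathcomp Require Import all_boot all_algebra.
From mathcomp Require Import boolp.
From mathcomp Require Import zify.
Set Implicit Arguments. Unset Strict Implicit. Unset Printing Implicit Defensive.

(* The elements of the n-semiball at s_i are the reduced words s_i s_(j_1) ... s_(j_L)
   with L <= n, i.e. the walks of length at most n from i in the graph with adjacency
   matrix K.  As K is a 0/1 matrix, the walks of length L from i to l number K^L(i,l);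
   this gives (i), and (ii) follows by cutting the lengths n+1, ..., n + q(m+1) into
   the q blocks n + j(m+1) + 1, ..., n + j(m+1) + 1 + m.
   For (iii), a word of the large semiball longer than n + 1 letters is p v, where p
   is the word of a walk of length n + j(m+1) + 1 from i minus its last letter s_l,
   and v lies in the m-semiball at s_l.  So the large semiball is covered by the
   n-semiball and by the translates p Delta^(s_l)_m.  Counting patterns is
   submultiplicative over unions and does not increase under translation, and for
   each l there are \sum_j K^(n + j(m+1) + 1)(i,l) translates of Delta^(s_l)_m. *)

Lemma uniq_flatten_labelled (S R : eqType) (s : seq S) (t : S -> seq R)
    (label : R -> S) :
  uniq s -> {in s, forall x, uniq (t x)} ->
  {in s, forall x, {in t x, forall z, label z = x}} ->
  uniq (flatten [seq t x | x <- s]).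
Proof.
elim: s => //= x s IHs /andP[xs s_uniq] t_uniq t_label.
rewrite cat_uniq t_uniq ?mem_head // IHs //; last 2 first.
- by move=> y ys; apply: t_uniq; rewrite inE ys orbT.
- by move=> y ys; apply: t_label; rewrite inE ys orbT.
rewrite andbT; apply/hasP => -[z /flatten_mapP[y ys zy] zx].
have := t_label x (mem_head x s) z zx.
by rewrite (t_label y _ z zy) ?inE ?ys ?orbT // => yx; rewrite -yx ys in xs.
Qed.

Lemma prod_count (T : Type) (J : finType) (s : seq T) (g : T -> J) (f : J -> nat) :
  \prod_(x <- s) f (g x) = \prod_(c : J) f c ^ count (fun x => g x == c) s.
Proof.
rewrite (partition_big g xpredT) //=; apply: eq_bigr => c _.
rewrite (eq_bigr (fun=> f c)) => [|x /eqP-> //].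
by rewrite big_const_seq iter_muln muln1.
Qed.

Lemma exists_block n m q N : n < N <= n + q * (m + 1) ->
  exists2 j, j < q & n + j * (m + 1) + 1 <= N <= n + j * (m + 1) + 1 + m.
Proof.
move=> /andP[nN Nq]; exists ((N - n.+1) %/ (m + 1)).
  by rewrite ltn_divLR ?addn1 //; lia.
have := divn_eq (N - n.+1) (m + 1); have := ltn_pmod (N - n.+1) (ltn0Sn m).
rewrite addn1; lia.
Qed.

Section ReducedWords.
Variables (k : nat) (K : 'M[nat]_k).
Local Notation edge := (fun a b : 'I_k => K a b != 0%N).

Lemma cancelw_rcons_path s c v :
  path edge c v -> cancelw K (rev (rcons s c)) v = rcons s c ++ v.
Proof.
rewrite rev_rcons; case: v => [|d v] /=; first by rewrite catrevE revK cats1 cats0.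
by case/andP=> /negbTE-> _; rewrite catrevE revK cat_rcons.
Qed.

Lemma cancelw_cat rg p v : adm K (p ++ v) ->
  cancelw K rg (p ++ v) = cancelw K (rev (cancelw K rg p)) v.
Proof.
elim: p rg => [|b p IHp] [|a rg] /=.
- by [].
- by rewrite [in RHS]catrevE rev_cat revK; case: v.
- move=> pv; rewrite (lastI b p) cancelw_rcons_path -?lastI //.
  by move: pv; rewrite cat_path => /andP[].
move=> pv; case: eqP => _; first exact/IHp/(path_sorted pv).
have -> : catrev rg [:: a, b & p] = rcons (rev rg ++ a :: belast b p) (last b p).
  by rewrite catrevE rcons_cat /= -lastI.
rewrite cancelw_rcons_path; last by move: pv; rewrite cat_path => /andP[].
by rewrite rcons_cat /= -lastI catrevE -catA.
Qed.

Lemma mulw_adm_cat p v : adm K (p ++ v) -> mulw K p v = p ++ v.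
Proof.
case/lastP: p => [|p c]; first by case: v.
rewrite /adm cat_rcons sorted_cat_cons => /andP[_ cv].
by rewrite /mulw cancelw_rcons_path // cat_rcons.
Qed.

Lemma mulw_assoc_adm g p v : adm K (p ++ v) ->
  mulw K g (mulw K p v) = mulw K (mulw K g p) v.
Proof. by move=> pv; rewrite (mulw_adm_cat pv) /mulw cancelw_cat. Qed.

End ReducedWords.

Section Walks.
Variables (k : nat) (K : 'M[nat]_k).
Local Notation edge := (fun a b : 'I_k => K a b != 0%N).

Fixpoint walks (i : 'I_k) (L : nat) : seq (seq 'I_k) :=
  if L is L'.+1 then
    flatten [seq map (cons j) (walks j L') | j <- [seq j <- enum 'I_k | K i j != 0%N]]
  else [:: [::]].

Lemma mem_walks i L s : (s \in walks i L) = path edge i s && (size s == L).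
Proof.
elim: L i s => [|L IHL] i s /=.
  by rewrite inE; case: s => [|j s] //=; rewrite andbF.
apply/flatten_mapP/idP => [[j + /mapP[s' + ->]]|].
  by rewrite mem_filter mem_enum andbT IHL /= => -> /andP[-> /eqP->] /=.
case: s => [|j s] //= /andP[/andP[ij js] sL].
by exists j; [rewrite mem_filter mem_enum ij | apply: map_f; rewrite IHL js].
Qed.

Lemma walks_uniq i L : uniq (walks i L).
Proof.
elim: L i => [|L IHL] i //=.
apply: (uniq_flatten_labelled (label := head i)).
- by rewrite filter_uniq ?enum_uniq.
- by move=> j _; rewrite map_inj_uniq // => s s' [].
by move=> j _ _ /mapP[s _ ->].
Qed.

Definition walks_upto i n := flatten [seq walks i L | L <- iota 0 n.+1].

Lemma mem_walks_upto i n s :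
  (s \in walks_upto i n) = path edge i s && (size s <= n).
Proof.
apply/flatten_mapP/idP => [[L]|/andP[s_path s_size]].
  by rewrite mem_iota ltnS mem_walks => ? /andP[-> /eqP->].
by exists (size s); rewrite ?mem_iota ?ltnS // mem_walks s_path eqxx.
Qed.

Lemma walks_upto_uniq i n : uniq (walks_upto i n).
Proof.
apply: (uniq_flatten_labelled (label := size)); first exact: iota_uniq.
  by move=> L _; apply: walks_uniq.
by move=> L _ s; rewrite mem_walks => /andP[_ /eqP].
Qed.

Lemma size_walks_upto i n :
  size (walks_upto i n) = \sum_(L < n.+1) size (walks i L).
Proof. by rewrite size_flatten sumnE !big_map -val_enum_ord big_map enumT. Qed.

Hypothesis K01 : forall a b, K a b <= 1.

Lemma count_walks_last i L l :
  count (fun s => last i s == l) (walks i L) = (K ^+ L)%R i l.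
Proof.
elim: L i => [|L IHL] i /=.
  by rewrite addn0 GRing.expr0 -idmxE mxE natn eq_sym.
rewrite GRing.exprS -mulmxE mxE count_flatten sumnE !big_map big_filter.
rewrite big_enum_cond big_mkcond /=; apply: eq_bigr => j _.
have := K01 i j; case: (K i j) => [|[|//]] _ //=.
by rewrite GRing.mul1r count_map -IHL.
Qed.

Lemma size_walks i L : size (walks i L) = \sum_(l < k) (K ^+ L)%R i l.
Proof.
rewrite -sum1_size (partition_big (fun s => last i s) xpredT) //=.
by apply: eq_bigr => l _; rewrite sum1_count count_walks_last.
Qed.

End Walks.

Section SemiballAtGenerator.
Variables (k : nat) (K : 'M[nat]_k).

Lemma mem_Gupto n (h : G K) : (h \in Gupto K n) = (lenG h <= n).
Proof.
rewrite mem_pmap_sub /lenG; apply/flatten_mapP/idP => [[L + /mapP[t _ ->]]|hn].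
  by rewrite mem_iota ltnS size_tuple.
exists (size (val h)); rewrite ?mem_iota ?ltnS //.
by apply/mapP; exists (in_tuple (val h)); rewrite ?mem_enum.
Qed.

Lemma mem_semiball_gen i n (x : G K) :
  (x \in semiball (gen K i) n) = (val x \in [seq i :: s | s <- walks_upto K i n]).
Proof.
rewrite mem_undup; apply/mapP/mapP => [[h]|[s]].
  rewrite mem_filter mem_Gupto /lenG /= => /andP[+ hn] ->.
  case: h hn => -[|j s] /= s_adm; rewrite /mulw /=.
    by exists [::]; rewrite ?mem_walks_upto.
  case: ifP => [_ _ /eqP|/negbT ij sn _]; first by lia.
  by exists (j :: s); rewrite // mem_walks_upto /= ij s_adm.
rewrite mem_walks_upto => /andP[s_path sn] xs.
have s_adm : adm K s := path_sorted s_path.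
exists (exist _ s s_adm).
  by rewrite mem_filter mem_Gupto /lenG /= sn andbT (mulw_adm_cat (p := [:: i])).
by apply: val_inj; rewrite /= xs (mulw_adm_cat (p := [:: i])).
Qed.

Lemma perm_semiball_gen_walks i n :
  perm_eq (map val (semiball (gen K i) n)) [seq i :: s | s <- walks_upto K i n].
Proof.
have cons_inj : injective (cons i) by move=> s s' [].
apply: uniq_perm.
- by rewrite (map_inj_uniq val_inj) undup_uniq.
- by rewrite (map_inj_uniq cons_inj) walks_upto_uniq.
move=> w; apply/mapP/idP => [[x + ->]|]; first by rewrite mem_semiball_gen.
case/mapP=> s s_walk ->; have := s_walk; rewrite mem_walks_upto => /andP[s_path _].
by exists (exist _ (i :: s) s_path); rewrite // mem_semiball_gen (map_f (cons i) s_walk).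
Qed.

End SemiballAtGenerator.

Section WalkCount.
Variables (k : nat) (K : 'M[nat]_k).

Definition nwalks i n := \sum_(L < n.+1) \sum_(l < k) (K ^+ L)%R i l.

Lemma nwalksE i n :
  nwalks i n = 1 + \sum_(1 <= L < n.+1) \sum_(l < k) (K ^+ L)%R i l.
Proof.
rewrite /nwalks big_ord_recl big_add1 big_mkord /=; congr (_ + _).
rewrite GRing.expr0 (bigD1 i) //= big1 => [|l /negbTE li].
  by rewrite mxE eqxx.
by rewrite mxE eq_sym li.
Qed.

Lemma nwalks_addS i N m :
  nwalks i (N + m.+1) = nwalks i N + \sum_(c < k) (K ^+ N.+1)%R i c * nwalks c m.
Proof.
rewrite /nwalks -addSn big_split_ord /=; congr (_ + _).
under eq_bigr do under eq_bigr do rewrite GRing.exprD -mulmxE mxE.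
under eq_bigr do rewrite exchange_big.
rewrite exchange_big /=; apply: eq_bigr => c _.
by rewrite big_distrr /=; apply: eq_bigr => L _; rewrite big_distrr.
Qed.

Lemma nwalks_blocks i n m q :
  nwalks i (n + q * (m + 1)) = nwalks i n +
    \sum_(l < k) \sum_(j < q) (K ^+ (n + j * (m + 1) + 1))%R i l * nwalks l m.
Proof.
elim: q => [|q IHq]; first by rewrite addn0 big1 ?addn0 // => l _; rewrite big_ord0.
have -> : n + q.+1 * (m + 1) = n + q * (m + 1) + m.+1 by lia.
rewrite nwalks_addS IHq -addnA; congr (_ + _).
rewrite -big_split /=; apply: eq_bigr => l _.
by rewrite big_ord_recr /= [n + q * (m + 1) + 1]addn1.
Qed.

Hypothesis K01 : forall a b, K a b <= 1.

Lemma size_semiball_gen i n : size (semiball (gen K i) n) = nwalks i n.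
Proof.
rewrite -(size_map val) (perm_size (perm_semiball_gen_walks K i n)) size_map.
by rewrite size_walks_upto; apply: eq_bigr => L _; rewrite size_walks.
Qed.

End WalkCount.

Section PatternCount.
Variables (k : nat) (K : 'M[nat]_k) (A : finType).
Variable F : forall H : seq (G K), {ffun seq_sub H -> A} -> Prop.

Definition accepted (H : seq (G K)) : {set {ffun seq_sub H -> A}} :=
  [set u | `[< exists t : G K -> A, in_shift F t /\ accepts t u >]].

Definition npatterns H := #|accepted H|.

Lemma npatterns_semiball g n : pcount F g n = npatterns (semiball g n).
Proof. by []. Qed.

Lemma acceptedP H u :
  reflect (exists t : G K -> A, in_shift F t /\ accepts t u) (u \in accepted H).
Proof. by rewrite inE; apply: asboolP. Qed.

Definition pattern_at (t : G K -> A) (g : G K) H : {ffun seq_sub H -> A} :=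
  [ffun y => t (mulG g (ssval y))].

Lemma pattern_at_accepted t g H : in_shift F t -> pattern_at t g H \in accepted H.
Proof.
by move=> tX; apply/acceptedP; exists t; split=> //; exists g => y; rewrite ffunE.
Qed.

Section Reindex.
Variables (H H' : seq (G K)) (phi : G K -> G K).
Hypothesis phiH : forall h, h \in H -> phi h \in H'.

Definition reindex (u : {ffun seq_sub H' -> A}) : {ffun seq_sub H -> A} :=
  [ffun x => u (SeqSub (phiH (ssvalP x)))].

Lemma reindex_accepted (shift : G K -> G K) u :
  (forall g h, h \in H -> mulG (shift g) h = mulG g (phi h)) ->
  u \in accepted H' -> reindex u \in accepted H.
Proof.
move=> shiftE /acceptedP[t [tX [g tu]]]; apply/acceptedP; exists t; split=> //.
by exists (shift g) => x; rewrite ffunE -tu shiftE ?ssvalP.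
Qed.

Lemma reindex_agree u v h (hH : h \in H) (y : seq_sub H') :
  reindex u = reindex v -> ssval y = phi h -> u y = v y.
Proof.
move=> /ffunP/(_ (SeqSub hH)); rewrite !ffunE => uv yh.
by have <- : SeqSub (phiH (ssvalP (SeqSub hH))) = y by apply: val_inj.
Qed.

End Reindex.

Lemma npatterns_subset H H' : {subset H <= H'} -> npatterns H <= npatterns H'.
Proof.
move=> sub; apply: leq_trans (leq_imset_card (reindex (phi := id) sub) _).
apply/subset_leq_card/subsetP => u /acceptedP[t [tX [g tu]]].
apply/imsetP; exists (pattern_at t g H'); first exact: pattern_at_accepted.
by apply/ffunP => x; rewrite !ffunE -tu.
Qed.

Lemma npatterns_cat H1 H2 : npatterns (H1 ++ H2) <= npatterns H1 * npatterns H2.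
Proof.
have sub1 : {subset H1 <= H1 ++ H2} by move=> h; rewrite mem_cat => ->.
have sub2 : {subset H2 <= H1 ++ H2} by move=> h; rewrite mem_cat orbC => ->.
pose split_pattern u := (reindex (phi := id) sub1 u, reindex (phi := id) sub2 u).
rewrite /npatterns -cardsX -(card_in_imset (f := split_pattern)); last first.
  move=> u v _ _ [uv1 uv2]; apply/ffunP => y.
  have := ssvalP y; rewrite mem_cat => /orP[yH1|yH2].
    exact: (reindex_agree (phi := id) yH1 uv1).
  exact: (reindex_agree (phi := id) yH2 uv2).
apply/subset_leq_card/subsetP => _ /imsetP[u uX ->].
by rewrite inE /= !(reindex_accepted _ (shift := id)).
Qed.

Lemma npatterns_nil : npatterns [::] <= 1.
Proof. by apply: leq_trans (max_card _) _; rewrite card_ffun card_seq_sub. Qed.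

Lemma npatterns_flatten (Hs : seq (seq (G K))) :
  npatterns (flatten Hs) <= \prod_(H <- Hs) npatterns H.
Proof.
elim: Hs => [|H Hs IHHs]; first by rewrite big_nil npatterns_nil.
rewrite big_cons; apply: leq_trans (npatterns_cat _ _) _.
by rewrite leq_mul2l IHHs orbT.
Qed.

Lemma npatterns_translate (P : G K) (H : seq (G K)) :
  (forall g, {in H, forall h, mulG g (mulG P h) = mulG (mulG g P) h}) ->
  npatterns (map (mulG P) H) <= npatterns H.
Proof.
move=> assoc; have PH h : h \in H -> mulG P h \in map (mulG P) H by apply: map_f.
rewrite /npatterns -(card_in_imset (f := reindex PH)); last first.
  move=> u v _ _ uv; apply/ffunP => y; have /mapP[h hH yh] := ssvalP y.
  exact: (reindex_agree (phi := mulG P) hH uv yh).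
apply/subset_leq_card/subsetP => _ /imsetP[u uX ->].
by apply: (reindex_accepted PH (shift := fun g => mulG g P)) => // g h /assoc->.
Qed.

End PatternCount.

Section Decomposition.
Variables (k : nat) (K : 'M[nat]_k).
Hypothesis K01 : forall a b, K a b <= 1.
Local Notation edge := (fun a b : 'I_k => K a b != 0%N).
Variables (i : 'I_k) (n m q : nat).

Definition oneG : G K := exist _ [::] (adm_nil K).

Definition stem s : G K := insubd oneG (belast i s).

Lemma stem_catE s t : path edge i s -> val (stem s) ++ last i s :: t = i :: s ++ t.
Proof.
move=> s_path; rewrite insubdK -?cat_rcons -?lastI //.
have : adm K (i :: s) := s_path.
by rewrite (lastI i s) /adm -cats1 => /cat_sorted2[].
Qed.

Definition piece s := map (mulG (stem s)) (semiball (gen K (last i s)) m).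

Lemma npatterns_piece (A : finType) F s : path edge i s ->
  npatterns F (piece s) <= npatterns (A := A) F (semiball (gen K (last i s)) m).
Proof.
move=> s_path; apply: npatterns_translate => g h.
rewrite mem_semiball_gen => /mapP[t]; rewrite mem_walks_upto => /andP[t_path _] ht.
apply: val_inj; rewrite /= mulw_assoc_adm // ht stem_catE //=.
by rewrite cat_path s_path.
Qed.

Definition prefixes := flatten [seq walks K i (n + j * (m + 1) + 1) | j <- iota 0 q].

Lemma prefixes_path s : s \in prefixes -> path edge i s.
Proof. by case/flatten_mapP=> j _; rewrite mem_walks => /andP[]. Qed.

Lemma count_prefixes_last l :
  count (fun s => last i s == l) prefixes
    = \sum_(j < q) (K ^+ (n + j * (m + 1) + 1))%R i l.
Proof.
rewrite count_flatten sumnE !big_map -val_enum_ord big_map enumT.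
by apply: eq_bigr => j _; rewrite count_walks_last.
Qed.

Lemma semiball_cover :
  {subset semiball (gen K i) (n + q * (m + 1))
     <= semiball (gen K i) n ++ flatten (map piece prefixes)}.
Proof.
move=> x; rewrite mem_cat !mem_semiball_gen => /mapP[s].
rewrite mem_walks_upto => /andP[s_path sN] xs.
have [sn|ns] := leqP (size s) n.
  by rewrite xs; apply/orP; left; apply: map_f; rewrite mem_walks_upto s_path.
have /exists_block[j jq /andP[js sj]] : n < size s <= n + q * (m + 1) by rewrite ns.
set a := n + j * (m + 1) + 1 in js sj.
have := s_path; rewrite -(cat_take_drop a s) cat_path => /andP[w_path t_path].
have w_pref : take a s \in prefixes.
  apply/flatten_mapP; exists j; first by rewrite mem_iota.
  by rewrite mem_walks w_path size_take_min /=; apply/eqP/minn_idPl.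
apply/orP; right; apply/flatten_mapP; exists (take a s) => //.
apply/mapP; exists (exist (adm K) (last i (take a s) :: drop a s) t_path).
  by rewrite mem_semiball_gen (map_f (cons _)) // mem_walks_upto t_path size_drop; lia.
by apply: val_inj; rewrite /= mulw_adm_cat stem_catE ?cat_take_drop // -xs ?(valP x).
Qed.

Lemma pcount_semiball_blocks (A : finType)
    (F : forall H : seq (G K), {ffun seq_sub H -> A} -> Prop) :
  pcount F (gen K i) (n + q * (m + 1))
    <= pcount F (gen K i) n
       * \prod_(l < k) (pcount F (gen K l) m)
           ^ (\sum_(j < q) (K ^+ (n + j * (m + 1) + 1))%R i l).
Proof.
rewrite !npatterns_semiball.
apply: leq_trans (npatterns_subset F semiball_cover) _.
apply: leq_trans (npatterns_cat _ _ _) _; rewrite leq_mul2l; apply/orP; right.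
apply: leq_trans (npatterns_flatten _ _) _; rewrite big_map.
apply: (@leq_trans (\prod_(s <- prefixes) pcount F (gen K (last i s)) m)).
  rewrite big_seq [leqRHS]big_seq.
  by apply: leq_prod => s /prefixes_path /npatterns_piece.
rewrite (prod_count _ (fun s => last i s) (fun l => pcount F (gen K l) m)).
by under eq_bigr do rewrite count_prefixes_last.
Qed.

End Decomposition.

Theorem lemma3p4 (k : nat) (K : 'M[nat]_k) (HK : forall a b, K a b <= 1)
  (A : finType) (F : forall H : seq (G K), {ffun seq_sub H -> A} -> Prop)
  (i : 'I_k) (m n q : nat) (hq : 1 <= q) :
  [/\ size (semiball (gen K i) n)
        = 1 + \sum_(1 <= l < n.+1) \sum_(j < k) (K ^+ l)%R i j,
      size (semiball (gen K i) (n + q * (m + 1)))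
        = size (semiball (gen K i) n)
          + \sum_(l < k) \sum_(j < q)
              (K ^+ (n + j * (m + 1) + 1))%R i l * size (semiball (gen K l) m)
    & pcount F (gen K i) (n + q * (m + 1))
        <= pcount F (gen K i) n
           * \prod_(l < k) (pcount F (gen K l) m)
               ^ (\sum_(j < q) (K ^+ (n + j * (m + 1) + 1))%R i l) ].
Proof.
split; last exact: pcount_semiball_blocks.
- by rewrite size_semiball_gen // nwalksE.
rewrite !size_semiball_gen // nwalks_blocks.
by under [in RHS]eq_bigr do under eq_bigr do rewrite size_semiball_gen //.
Qed.
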